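(* Let $s \geq 0$ be real, let $u$ be a zero-mean trigonometric polynomial on $\mathbb{T}^d$ (or more generally a zero-mean function regular enough for all sums below to converge absolutely), and let $v = \overline{u}$. Define \[ Z_6(u) := \langle \Lambda^s (W_5)_1(u,v), \Lambda^s v\rangle + \langle \Lambda^s u, \Lambda^s (W_5)_2(u,v)\rangle . \] Then \[ Z_6(u) = \frac{3i}{32}\sum_{\substack{j,\ell,k\in\mathbb{Z}^d\setminus\{0\}\\ |k| = |j|+|\ell|}} \big(u_ju_{-j}u_\ell u_{-\ell}v_kv_{-k} - v_jv_{-j}v_\ell v_{-\ell}u_ku_{-k}\big)\,|j|\,|\ell|\,|k|\,\big(|k|^{2s} - |j|^{2s} - |\ell|^{2s}\big). \] In particular $Z_6(u) = 0$ for $s = \frac12$, while for $s=1$ the factor $|k|^{2s}-|j|^{2s}-|\ell|^{2s}$ equals $2|j||\ell|$ on the set of summation.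
   Context: $\mathbb{T}^d = (\mathbb{R}/2\pi\mathbb{Z})^d$. Zero-mean functions are written $u = \sum_{j\in\mathbb{Z}^d\setminus\{0\}} u_j e^{ij\cdot x}$; $|\cdot|$ is the Euclidean norm. $\Lambda^s$ is the Fourier multiplier $e^{ij\cdot x}\mapsto |j|^s e^{ij\cdot x}$. The pairing is the (normalized) bilinear form $\langle w,h\rangle := \sum_{j\neq0} w_j h_{-j}$. $\delta_a^b = 1$ if $a=b$ and $0$ otherwise; a quotient of the form $(1-\delta_a^b)/(a-b)$ is defined to be $0$ when $a=b$. All sums run over $j,\ell,k \in \mathbb{Z}^d\setminus\{0\}$ subject to the indicated constraints. For complex-conjugate pairs $(u,v)$, $v=\overline u$ (so $v_j = \overline{u_{-j}}$), \[ (W_5)_1(u,v) = \tfrac{i}{32}\!\!\sum_{|j|=|\ell|}\!\! u_ju_{-j}v_\ell v_{-\ell}u_k e^{ik\cdot x}|j|^2|\ell|^2\Big(\tfrac{1}{|j|+|k|} - \tfrac{1-\delta_{|\ell|}^{|k|}}{|\ell|-|k|}\Big) + \tfrac{3i}{32}\!\!\sum_{|k|=|j|+|\ell|}\!\! u_ju_{-j}u_\ell u_{-\ell}v_k e^{ik\cdot x}|j||\ell||k| \] \[ + \tfrac{i}{16}\!\!\sum_{|j|=|k|}\!\! u_ju_{-j}u_\ell v_{-\ell}v_k e^{ik\cdot x}|j|^2|\ell|\Big(6 + \tfrac{|\ell|}{|\ell|+|j|} + \tfrac{|\ell|(1-\delta_{|\ell|}^{|j|})}{|\ell|-|j|}\Big)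 + \tfrac{3i}{16}\!\!\sum_{|k|=|j|-|\ell|}\!\! u_ju_{-j}v_\ell v_{-\ell}v_k e^{ik\cdot x}|j||\ell||k|, \] and $(W_5)_2(u,v)$ is obtained from $(W_5)_1(u,v)$ by exchanging the roles of $u$ and $v$ everywhere and multiplying by $-1$ (equivalently, $(W_5)_2(u,\overline u) = \overline{(W_5)_1(u,\overline u)}$). *)

From HB Require Import structures.
From mathcomp Require Import all_boot all_order all_algebra.
From mathcomp Require Import all_classical all_reals all_analysis.
From mathcomp Require Import complex.
Set Implicit Arguments. Unset Strict Implicit. Unset Printing Implicit Defensive.
Import Order.TTheory GRing.Theory Num.Theory.
Local Open Scope ring_scope.

Section Defs.
Variables (R : realType) (d : nat).
Local Notation C := (R[i]).
Local Notation Zd := ('rV[int]_d).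

Definition znorm (j : Zd) : R := Num.sqrt (\sum_(i < d) ((j ord0 i)%:~R) ^+ 2).

Definition RtoC (x : R) : C := (x +i* 0)%C.

(* Fourier coefficients are functions Zd -> C.  T is a finite list of lattice
   points outside of which every summand vanishes; all sums over
   Z^d \ {0} are computed as sums over T \ {0}. *)
Definition sum1 (T : seq Zd) (F : Zd -> C) : C :=
  \sum_(j <- T | j != 0) F j.
Definition sum2 (T : seq Zd) (F : Zd -> Zd -> C) : C :=
  \sum_(j <- T | j != 0) \sum_(l <- T | l != 0) F j l.
Definition sum3 (T : seq Zd) (F : Zd -> Zd -> Zd -> C) : C :=
  \sum_(j <- T | j != 0) \sum_(l <- T | l != 0) \sum_(k <- T | k != 0) F j l k.

Definition kdelta (a b : R) : R := (a == b)%:R.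

Definition W51 (T : seq Zd) (u v : Zd -> C) (k : Zd) : C :=
  if k == 0 then 0 else
  let nk := znorm k in
  'i / 32%:R * sum2 T (fun j l =>
     if znorm j == znorm l then
       u j * u (- j) * v l * v (- l) * u k *
       RtoC (znorm j ^+ 2 * znorm l ^+ 2 *
             (1 / (znorm j + nk) - (1 - kdelta (znorm l) nk) / (znorm l - nk)))
     else 0)
  + 3%:R * 'i / 32%:R * sum2 T (fun j l =>
     if nk == znorm j + znorm l then
       u j * u (- j) * u l * u (- l) * v k * RtoC (znorm j * znorm l * nk)
     else 0)
  + 'i / 16%:R * sum2 T (fun j l =>
     if znorm j == nk then
       u j * u (- j) * u l * v (- l) * v k *
       RtoC (znorm j ^+ 2 * znorm l *
             (6%:R + znorm l / (znorm l + znorm j)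
              + znorm l * (1 - kdelta (znorm l) (znorm j)) / (znorm l - znorm j)))
     else 0)
  + 3%:R * 'i / 16%:R * sum2 T (fun j l =>
     if nk == znorm j - znorm l then
       u j * u (- j) * v l * v (- l) * v k * RtoC (znorm j * znorm l * nk)
     else 0).

Definition W52 (T : seq Zd) (u v : Zd -> C) (k : Zd) : C := - W51 T v u k.

Definition Lambda (s : R) (w : Zd -> C) (j : Zd) : C := RtoC (znorm j `^ s) * w j.

Definition pairing (T : seq Zd) (w h : Zd -> C) : C := sum1 T (fun j => w j * h (- j)).

(* v = conj u, i.e. v_j = conj (u_{-j}) *)
Definition conjF (u : Zd -> C) (j : Zd) : C := conjc (u (- j)).

Definition Z6 (T : seq Zd) (s : R) (u : Zd -> C) : C :=
  let v := conjF u in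
  pairing T (Lambda s (W51 T u v)) (Lambda s v) + pairing T (Lambda s u) (Lambda s (W52 T u v)).

Definition Z6rhs (T : seq Zd) (s : R) (u : Zd -> C) : C :=
  let v := conjF u in
  3%:R * 'i / 32%:R * sum3 T (fun j l k =>
    if znorm k == znorm j + znorm l then
      (u j * u (- j) * u l * u (- l) * v k * v (- k)
       - v j * v (- j) * v l * v (- l) * u k * u (- k))
      * RtoC (znorm j * znorm l * znorm k
              * (znorm k `^ (2 * s) - znorm j `^ (2 * s) - znorm l `^ (2 * s)))
    else 0).

End Defs.

(* Since |-k| = |k| and (W5)_2(u,v) = -(W5)_1(v,u), the two pairings merge into one sum
     Z_6 = sum_k p(|k|) ((W5)_1(u,v)_k v_{-k} - u_k (W5)_1(v,u)_{-k}),   p(x) = x^s x^s,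
   and (W5)_1 is a combination of four double sums with kernels [kerA] ... [kerD].  Each
   kernel thus contributes an antisymmetrised triple sum [contrib], and for an arbitrary
   weight p and arbitrary coefficients u, v (no conjugacy is needed):
   - the kernel A contribution vanishes: the swap j <-> l exchanges u and v;
   - the kernel C contribution vanishes: same, after the reflection l -> -l of the
     (symmetric) summation range;
   - the kernel B contribution is the sum [resonant] over |k| = |j| + |l| weighted by p(|k|);
   - the kernel D contribution is, after renaming (j, l, k) -> (k, l, j), minus the same sum
     weighted by p(|j|), which by the symmetry j <-> l also equals the one weighted by p(|l|).
   Adding up with the coefficients 3i/32 and 3i/16 = 2 * 3i/32 gives the resonant sum with
   weight p(|k|) - p(|j|) - p(|l|) ([Zweighted_resonant]).  The theorem is this identity for
   p = |.|^{2s} ([Z6_resonant]); the cases s = 1/2 and s = 1 are then elementary identities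
   for powR.  All sums range over the finite list S ++ (-S) (without repetitions). *)
From HB Require Import structures.
From mathcomp Require Import all_boot all_order all_algebra.
From mathcomp Require Import all_classical all_reals all_analysis.
From mathcomp Require Import complex.
From mathcomp Require Import ring.
Set Implicit Arguments. Unset Strict Implicit. Unset Printing Implicit Defensive.
Import Order.TTheory GRing.Theory Num.Theory.
Local Open Scope ring_scope.

Section RealIdentities.
Variable R : realType.

Lemma RtoCE (x : R) : RtoC x = real_complex R x.
Proof. by []. Qed.

Lemma RtoCM (a b : R) : RtoC (a * b) = RtoC a * RtoC b.
Proof. by rewrite !RtoCE rmorphM. Qed.

Lemma RtoCB (a b : R) : RtoC (a - b) = RtoC a - RtoC b.
Proof. by rewrite !RtoCE rmorphB. Qed.

Lemma RtoC0 : RtoC (0 : R) = 0.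
Proof. by rewrite RtoCE rmorph0. Qed.

(* x^{2s} = x^s x^s, the square that Lambda^s applied twice produces. *)
Lemma powR_double (x s : R) : x `^ (2 * s) = x `^ s * x `^ s.
Proof. by rewrite mulrC powRrM powR_mulrn ?powR_ge0 // expr2. Qed.

Lemma resonant_factor_half (a b : R) : 0 <= a -> 0 <= b ->
  (a + b) `^ (2 * 2^-1) - a `^ (2 * 2^-1) - b `^ (2 * 2^-1) = 0.
Proof.
move=> a0 b0; rewrite mulfV ?pnatr_eq0 // !powRr1 ?addr_ge0 //; ring.
Qed.

Lemma resonant_factor_one (a b : R) : 0 <= a -> 0 <= b ->
  (a + b) `^ (2 * 1) - a `^ (2 * 1) - b `^ (2 * 1) = 2 * a * b.
Proof. move=> a0 b0; rewrite mulr1 !powR_mulrn ?addr_ge0 //; ring. Qed.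

End RealIdentities.

Section LatticeSums.
Variables (R : realType) (d : nat).
Local Notation Zd := ('rV[int]_d).
Local Notation C := (R[i]).
Local Notation nrm := (znorm R).
Implicit Types (T S : seq Zd) (j l k : Zd).

Lemma znorm_ge0 k : 0 <= nrm k.
Proof. exact: sqrtr_ge0. Qed.

Lemma znormN k : nrm (- k) = nrm k.
Proof.
rewrite /znorm; congr Num.sqrt; apply: eq_bigr => i _.
by rewrite mxE intrN sqrrN.
Qed.

Lemma sum_reflect T (F : Zd -> C) :
  uniq T -> (forall x, (- x \in T) = (x \in T)) ->
  \sum_(l <- T | l != 0) F (- l) = \sum_(l <- T | l != 0) F l.
Proof.
move=> uT symT.
have negT : perm_eq (map -%R T) T.
  apply: uniq_perm => //; first by rewrite (map_inj_uniq oppr_inj).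
  by move=> x; rewrite -[x in LHS]opprK (mem_map oppr_inj) symT.
rewrite -(perm_big _ negT) big_map.
by apply: congr_big => // l; rewrite ?oppr_eq0 ?opprK.
Qed.

Lemma symmetrized_range S (x : Zd) :
  let T := undup (S ++ map -%R S) in (- x \in T) = (x \in T).
Proof.
rewrite /= !mem_undup !mem_cat.
have negS y : (- y \in map -%R S) = (y \in S) by rewrite mem_map //; exact: oppr_inj.
by rewrite negS -[x in (x \in map _ _)]opprK negS orbC.
Qed.

Lemma sum2Ml T (F : Zd -> Zd -> C) c :
  c * sum2 T F = sum2 T (fun j l => c * F j l).
Proof. by rewrite /sum2 mulr_sumr; apply: eq_bigr => j _; rewrite mulr_sumr. Qed.

Lemma sum2Mr T (F : Zd -> Zd -> C) c :
  sum2 T F * c = sum2 T (fun j l => F j l * c).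
Proof. by rewrite /sum2 mulr_suml; apply: eq_bigr => j _; rewrite mulr_suml. Qed.

Lemma sum3B T (F G : Zd -> Zd -> Zd -> C) :
  sum3 T F - sum3 T G = sum3 T (fun j l k => F j l k - G j l k).
Proof.
rewrite /sum3 -sumrB; apply: eq_bigr => j _; rewrite -sumrB.
by apply: eq_bigr => l _; rewrite -sumrB.
Qed.

Lemma sum3_swap T (F : Zd -> Zd -> Zd -> C) :
  sum3 T (fun j l k => F l j k) = sum3 T F.
Proof. by rewrite /sum3 exchange_big. Qed.

Lemma sum3_outer T (F : Zd -> Zd -> Zd -> C) :
  sum3 T F = \sum_(k <- T | k != 0) sum2 T (fun j l => F j l k).
Proof.
rewrite /sum3 /sum2 (eq_bigr (fun j => \sum_(k <- T | k != 0) \sum_(l <- T | l != 0) F j l k)).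
  by rewrite exchange_big.
by move=> j _; rewrite exchange_big.
Qed.

End LatticeSums.

Section Contributions.
Variables (R : realType) (d : nat) (T : seq 'rV[int]_d).
Local Notation Zd := ('rV[int]_d).
Local Notation C := (R[i]).
Local Notation nrm := (znorm R).
Implicit Types (u v : Zd -> C) (p : R -> C) (j l k : Zd).

Definition coefA (a b c : R) : R :=
  a ^+ 2 * b ^+ 2 * (1 / (a + c) - (1 - kdelta b c) / (b - c)).
Definition coefC (a b : R) : R :=
  a ^+ 2 * b * (6%:R + b / (b + a) + b * (1 - kdelta b a) / (b - a)).

Definition kerA u v j l k : C :=
  if nrm j == nrm l
  then u j * u (- j) * v l * v (- l) * u k * RtoC (coefA (nrm j) (nrm l) (nrm k)) else 0.
Definition kerB u v j l k : C :=
  if nrm k == nrm j + nrm l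
  then u j * u (- j) * u l * u (- l) * v k * RtoC (nrm j * nrm l * nrm k) else 0.
Definition kerC u v j l k : C :=
  if nrm j == nrm k
  then u j * u (- j) * u l * v (- l) * v k * RtoC (coefC (nrm j) (nrm l)) else 0.
Definition kerD u v j l k : C :=
  if nrm k == nrm j - nrm l
  then u j * u (- j) * v l * v (- l) * v k * RtoC (nrm j * nrm l * nrm k) else 0.

Lemma W51_kernels u v k : k != 0 ->
  W51 T u v k =
    'i / 32%:R * sum2 T (fun j l => kerA u v j l k)
  + 3%:R * 'i / 32%:R * sum2 T (fun j l => kerB u v j l k)
  + 'i / 16%:R * sum2 T (fun j l => kerC u v j l k)
  + 3%:R * 'i / 16%:R * sum2 T (fun j l => kerD u v j l k).
Proof. by move=> /negbTE k0; rewrite /W51 k0. Qed.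

Definition Zweighted p u v : C :=
  \sum_(k <- T | k != 0) p (nrm k) * (W51 T u v k * v (- k) - u k * W51 T v u (- k)).

Lemma Z6_weighted s u :
  Z6 T s u = Zweighted (fun x => RtoC (x `^ s) * RtoC (x `^ s)) u (conjF u).
Proof.
rewrite /Z6 /pairing /sum1 -big_split /=; apply: eq_bigr => k _.
by rewrite /W52 /Lambda znormN; ring.
Qed.

Definition contrib (ker : (Zd -> C) -> (Zd -> C) -> Zd -> Zd -> Zd -> C) p u v : C :=
  \sum_(k <- T | k != 0) p (nrm k) *
    (sum2 T (fun j l => ker u v j l k) * v (- k) - u k * sum2 T (fun j l => ker v u j l (- k))).

Lemma Zweighted_split p u v :
  Zweighted p u v =
    'i / 32%:R * contrib kerA p u v + 3%:R * 'i / 32%:R * contrib kerB p u v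
  + 'i / 16%:R * contrib kerC p u v + 3%:R * 'i / 16%:R * contrib kerD p u v.
Proof.
rewrite /contrib !mulr_sumr -!big_split /=; apply: eq_bigr => k k0.
by rewrite !W51_kernels ?oppr_eq0 //; ring.
Qed.

Lemma contrib_split ker p u v :
  contrib ker p u v =
    \sum_(k <- T | k != 0) sum2 T (fun j l => p (nrm k) * (ker u v j l k * v (- k)))
  - \sum_(k <- T | k != 0) sum2 T (fun j l => p (nrm k) * (u k * ker v u j l (- k))).
Proof.
rewrite /contrib -sumrB; apply: eq_bigr => k _.
by rewrite mulrBr sum2Mr sum2Ml !sum2Ml.
Qed.

Lemma contrib_triple ker p u v :
  contrib ker p u v =
  \sum_(k <- T | k != 0) \sum_(j <- T | j != 0) \sum_(l <- T | l != 0)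
     (p (nrm k) * (ker u v j l k * v (- k)) - p (nrm k) * (u k * ker v u j l (- k))).
Proof.
rewrite contrib_split -sumrB; apply: eq_bigr => k _.
by rewrite /sum2 -sumrB; apply: eq_bigr => j _; rewrite -sumrB.
Qed.

(* Kernel A cancels: exchanging j and l turns kerA u v into kerA v u. *)
Lemma contrib_kerA p u v : contrib kerA p u v = 0.
Proof.
rewrite /contrib big1 // => k _.
suff -> : sum2 T (fun j l => kerA u v j l k) * v (- k)
        = u k * sum2 T (fun j l => kerA v u j l (- k)) by rewrite subrr mulr0.
rewrite /sum2 [in RHS]exchange_big /= mulr_suml mulr_sumr; apply: eq_bigr => j _.
rewrite mulr_suml mulr_sumr; apply: eq_bigr => l _.
rewrite /kerA !znormN [nrm l == _]eq_sym.
by case: eqP => [->|_]; [ring | rewrite mul0r mulr0].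
Qed.

(* Kernel C cancels on a range closed under negation: exchange j and k, reflect l. *)
Lemma contrib_kerC p u v :
  uniq T -> (forall x, (- x \in T) = (x \in T)) -> contrib kerC p u v = 0.
Proof.
move=> uT symT; rewrite contrib_split; apply/eqP; rewrite subr_eq0; apply/eqP.
rewrite /sum2 [in RHS]exchange_big /=; apply: eq_bigr => k _; apply: eq_bigr => j _.
rewrite -(sum_reflect _ uT symT); apply: eq_bigr => l _.
rewrite /kerC !znormN opprK [nrm k == _]eq_sym.
by case: eqP => [->|_]; [ring | rewrite !(mul0r, mulr0)].
Qed.

Definition sextic u v j l k : C := u j * u (- j) * u l * u (- l) * v k * v (- k).

Definition resonant u v (w : Zd -> Zd -> Zd -> C) : C :=
  sum3 T (fun j l k => if nrm k == nrm j + nrm l then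
    (sextic u v j l k - sextic v u j l k) * RtoC (nrm j * nrm l * nrm k) * w j l k else 0).

Lemma resonantB u v (w1 w2 : Zd -> Zd -> Zd -> C) :
  resonant u v (fun j l k => w1 j l k - w2 j l k) = resonant u v w1 - resonant u v w2.
Proof.
rewrite /resonant sum3B /sum3; apply: eq_bigr => j _; apply: eq_bigr => l _.
apply: eq_bigr => k _; case: ifP => _; [ring | by rewrite subrr].
Qed.

(* The resonance condition, the weight |j||l||k| and the sextic monomials are all
   symmetric in j and l. *)
Lemma resonant_swap u v (w : Zd -> Zd -> Zd -> C) :
  resonant u v (fun j l k => w l j k) = resonant u v w.
Proof.
rewrite /resonant -[RHS]sum3_swap /sum3; apply: eq_bigr => j _; apply: eq_bigr => l _.
apply: eq_bigr => k _; rewrite [nrm l + _]addrC /sextic.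
by case: ifP => _ //; rewrite [nrm l * _]mulrC; ring.
Qed.

Lemma contrib_kerB p u v :
  contrib kerB p u v = resonant u v (fun j l k => p (nrm k)).
Proof.
rewrite contrib_triple /resonant sum3_outer /sum2.
apply: eq_bigr => k _; apply: eq_bigr => j _; apply: eq_bigr => l _.
rewrite /kerB /sextic !znormN.
by case: ifP => _; [ring | rewrite !(mul0r, mulr0) subrr].
Qed.

(* Kernel D contributes, after renaming (j, l, k) -> (k, l, j), minus the resonant
   sum with weight p(|j|). *)
Lemma contrib_kerD p u v :
  contrib kerD p u v = - resonant u v (fun j l k => p (nrm j)).
Proof.
rewrite contrib_triple /resonant /sum3 -sumrN; apply: eq_bigr => a _.
rewrite [in RHS]exchange_big /= -sumrN; apply: eq_bigr => c _; rewrite -sumrN.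
apply: eq_bigr => b _; rewrite /kerD /sextic !znormN.
have -> : (nrm a == nrm c - nrm b) = (nrm c == nrm a + nrm b) by rewrite eq_sym subr_eq.
by case: ifP => _; [rewrite !RtoCM; ring | rewrite !(mul0r, mulr0) subrr oppr0].
Qed.

Lemma Zweighted_resonant p u v :
  uniq T -> (forall x, (- x \in T) = (x \in T)) ->
  Zweighted p u v =
  3%:R * 'i / 32%:R * resonant u v (fun j l k => p (nrm k) - p (nrm j) - p (nrm l)).
Proof.
move=> uT symT.
rewrite Zweighted_split contrib_kerA contrib_kerC // contrib_kerB contrib_kerD.
rewrite !resonantB -[resonant u v (fun j l k => p (nrm l))](resonant_swap u v).
by field.
Qed.

End Contributions.

Section Z6Identity.
Variables (R : realType) (d : nat) (S : seq 'rV[int]_d) (u : 'rV[int]_d -> R[i]).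
Local Notation nrm := (znorm R).
Local Notation T := (undup (S ++ map -%R S)).

Lemma Z6_resonant (s : R) : Z6 T s u = Z6rhs T s u.
Proof.
rewrite Z6_weighted Zweighted_resonant ?undup_uniq //; last exact: symmetrized_range.
rewrite /Z6rhs /resonant; congr (_ * _); apply: eq_bigr => j _.
apply: eq_bigr => l _; apply: eq_bigr => k _; case: ifP => // _.
by rewrite /sextic !powR_double !RtoCM !RtoCB !RtoCM; ring.
Qed.

Lemma Z6rhs_half : Z6rhs T (2^-1) u = 0.
Proof.
rewrite /Z6rhs /sum3 big1 ?mulr0 // => j _; rewrite big1 // => l _.
rewrite big1 // => k _; case: eqP => // ->.
by rewrite resonant_factor_half ?znorm_ge0 // mulr0 RtoC0 mulr0.
Qed.

End Z6Identity.

Unset Implicit Arguments.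

Theorem mainTheorem6 (R : realType) (d : nat) (S : seq 'rV[int]_d)
  (u : 'rV[int]_d -> R[i])
  (hsupp : forall j, j \notin S -> u j = 0)  (* u is a trigonometric polynomial *)
  (hmean : u 0 = 0) :                        (* u has zero mean *)
  let T := undup (S ++ map -%R S) in
  (forall s : R, 0 <= s -> Z6 T s u = Z6rhs T s u)
  /\ Z6 T (2^-1) u = 0
  /\ (forall j l k : 'rV[int]_d, j != 0 -> l != 0 -> k != 0 ->
        znorm R k = znorm R j + znorm R l ->
        znorm R k `^ (2 * 1) - znorm R j `^ (2 * 1) - znorm R l `^ (2 * 1)
        = 2 * znorm R j * znorm R l).
Proof.
move=> T; split; first by move=> s _; exact: Z6_resonant.
split; first by rewrite Z6_resonant Z6rhs_half.
move=> j l k _ _ _ ->.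
exact: resonant_factor_one (znorm_ge0 R j) (znorm_ge0 R l).
Qed.
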